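(* Let $R$ be a $K$-algebra with an ideal $J$ such that $J$ and $R/J$ are both locally unit-regular. Then $R$ is locally unit-regular if and only if for every idempotent $e \in R$, every unit of the unital algebra $eRe/eJe$ lifts to a unit of $eRe$ (i.e., is the image of a unit of $eRe$ under the quotient map $eRe \to eRe/eJe$).
   Context: $K$ is a field; algebras are associative, not necessarily unital; ideals are two-sided and $K$-subspaces. For an idempotent $e$, $eRe$ is a unital algebra with identity $e$, and $eJe$ is an ideal of it. A unital ring $S$ is unit-regular if for each $x\in S$ there is a unit $u$ of $S$ with $xux = x$. A $K$-algebra $R$ is locally unit-regular if every finite subset of $R$ is contained in a $K$-subalgebra of $R$ that has its own identity element and is unit-regular. *)

From HB Require Import structures.
From mathcomp Require Import all_boot all_order all_algebra.
Set Implicit Arguments. Unset Strict Implicit. Unset Printing Implicit Defensive.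
Import GRing.Theory.
Local Open Scope ring_scope.

Record nualg (K : fieldType) := NUAlg {
  nua_sort :> lmodType K;
  nua_mul : nua_sort -> nua_sort -> nua_sort;
  nua_mulA : forall x y z, nua_mul x (nua_mul y z) = nua_mul (nua_mul x y) z;
  nua_mulDl : forall x y z, nua_mul (x + y) z = nua_mul x z + nua_mul y z;
  nua_mulDr : forall x y z, nua_mul x (y + z) = nua_mul x y + nua_mul x z;
  nua_mulZl : forall (a : K) x y, nua_mul (a *: x) y = a *: nua_mul x y;
  nua_mulZr : forall (a : K) x y, nua_mul x (a *: y) = a *: nua_mul x y
}.

Notation "x ⋅ y" := (@nua_mul _ _ x y) (at level 40, left associativity).

Section Defs.
Variables (K : fieldType) (R : nualg K).

Definition is_subalg (S : R -> Prop) : Prop :=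
  [/\ S 0, (forall x y, S x -> S y -> S (x + y)),
      (forall (a : K) x, S x -> S (a *: x)) &
      (forall x y, S x -> S y -> S (x ⋅ y))].

Definition is_ideal (J : R -> Prop) : Prop :=
  [/\ J 0, (forall x y, J x -> J y -> J (x + y)),
      (forall (a : K) x, J x -> J (a *: x)) &
      (forall r x, J x -> J (r ⋅ x) /\ J (x ⋅ r))].

Definition is_identity_of (S : R -> Prop) (e : R) : Prop :=
  S e /\ forall x, S x -> e ⋅ x = x /\ x ⋅ e = x.

Definition unit_regular_with (S : R -> Prop) (e : R) : Prop :=
  forall x, S x -> exists u v, [/\ S u, S v, u ⋅ v = e, v ⋅ u = e & x ⋅ u ⋅ x = x].

Definition locally_unit_regular_in (A : R -> Prop) : Prop :=
  forall s : seq R, (forall x, x \in s -> A x) ->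
    exists S : R -> Prop,
      [/\ is_subalg S, (forall x, S x -> A x), (forall x, x \in s -> S x) &
          exists e, is_identity_of S e /\ unit_regular_with S e].

Definition locally_unit_regular : Prop := locally_unit_regular_in (fun _ => True).

Definition corner (e : R) : R -> Prop := fun z => exists r, z = e ⋅ r ⋅ e.
Definition corner_in (J : R -> Prop) (e : R) : R -> Prop :=
  fun z => exists j, J j /\ z = e ⋅ j ⋅ e.

(* A unit of eRe/eJe is the
   class of some x in eRe for which there is y in eRe with xy - e and yx - e
   in eJe; it lifts if some unit u of eRe (inverse v in eRe) satisfies
   u - x in eJe, i.e. u maps to the class of x. *)
Definition units_lift (J : R -> Prop) (e : R) : Prop :=
  forall x y, corner e x -> corner e y ->
    corner_in J e (x ⋅ y - e) -> corner_in J e (y ⋅ x - e) ->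
    exists u v, [/\ corner e u, corner e v, u ⋅ v = e, v ⋅ u = e &
                    corner_in J e (u - x)].

End Defs.

(* pi : R -> Q is a surjective K-algebra homomorphism with kernel J, i.e.
   Q together with pi is (a copy of) the quotient algebra R/J. *)
Definition is_quotient_map (K : fieldType) (R Q : nualg K) (J : R -> Prop)
    (pi : R -> Q) : Prop :=
  [/\ (forall x y, pi (x + y) = pi x + pi y),
      (forall (a : K) x, pi (a *: x) = a *: pi x),
      (forall x y, pi (x ⋅ y) = pi x ⋅ pi y),
      (forall q, exists x, pi x = q) &
      (forall x, pi x = 0 <-> J x)].

From mathcomp Require Import all_boot all_order all_algebra.
Set Implicit Arguments. Unset Strict Implicit. Unset Printing Implicit Defensive.
Import GRing.Theory.
Local Open Scope ring_scope.

(* Forward, the inverse of a unit inner inverse of x in a unit-regular corner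
   eSe lifts the class of x. Backward, R is regular and has idempotent local
   units e, and for a unit-regular subalgebra T of R/J the preimage of
   pi(e) T pi(e) in eRe is unit-regular: units of pi(e) T pi(e) lift to eRe by
   hypothesis, and the remaining correction happens inside the locally
   unit-regular ideal J. *)

Section NonUnitalAlgebra.
Variables (K : fieldType) (A : nualg K).
Implicit Types (S T : A -> Prop) (x y z e f : A).

Lemma nmulA x y z : x ⋅ (y ⋅ z) = x ⋅ y ⋅ z. Proof. exact: nua_mulA. Qed.
Lemma nmulDl x y z : (x + y) ⋅ z = x ⋅ z + y ⋅ z. Proof. exact: nua_mulDl. Qed.
Lemma nmulDr x y z : x ⋅ (y + z) = x ⋅ y + x ⋅ z. Proof. exact: nua_mulDr. Qed.

Lemma nmul0r x : 0 ⋅ x = 0.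
Proof. by apply: (addrI (0 ⋅ x)); rewrite -nmulDl !addr0. Qed.

Lemma nmulr0 x : x ⋅ 0 = 0.
Proof. by apply: (addrI (x ⋅ 0)); rewrite -nmulDr !addr0. Qed.

Lemma nmulNr x y : (- x) ⋅ y = - (x ⋅ y).
Proof. by apply/eqP; rewrite -addr_eq0 -nmulDl addNr nmul0r. Qed.

Lemma nmulrN x y : x ⋅ (- y) = - (x ⋅ y).
Proof. by apply/eqP; rewrite -addr_eq0 -nmulDr addNr nmulr0. Qed.

Lemma nmulBl x y z : (x - y) ⋅ z = x ⋅ z - y ⋅ z.
Proof. by rewrite nmulDl nmulNr. Qed.
Lemma nmulBr x y z : x ⋅ (y - z) = x ⋅ y - x ⋅ z.
Proof. by rewrite nmulDr nmulrN. Qed.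

Lemma nmulA_eq x y z : x ⋅ y = z -> forall w, w ⋅ x ⋅ y = w ⋅ z.
Proof. by move=> xy w; rewrite -nmulA xy. Qed.

Lemma idem_corner_l e x : e ⋅ e = e -> e ⋅ x ⋅ e = x -> e ⋅ x = x.
Proof. by move=> ee exe; rewrite -exe !nmulA ee. Qed.

Lemma idem_corner_r e x : e ⋅ e = e -> e ⋅ x ⋅ e = x -> x ⋅ e = x.
Proof. by move=> ee exe; rewrite -exe -nmulA ee. Qed.

Section Subalgebra.
Variables (S : A -> Prop) (hS : is_subalg S).

Lemma subalg0 : S 0. Proof. by case: hS. Qed.
Lemma subalgD x y : S x -> S y -> S (x + y).
Proof. by case: hS => _ h _ _; apply: h. Qed.
Lemma subalgZ a x : S x -> S (a *: x).
Proof. by case: hS => _ _ h _; apply: h. Qed.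
Lemma subalgM x y : S x -> S y -> S (x ⋅ y).
Proof. by case: hS => _ _ _ h; apply: h. Qed.
Lemma subalgN x : S x -> S (- x).
Proof. by rewrite -scaleN1r; apply: subalgZ. Qed.
Lemma subalgB x y : S x -> S y -> S (x - y).
Proof. by move=> Sx Sy; apply: subalgD => //; apply: subalgN. Qed.

End Subalgebra.

Definition subcorner S e : A -> Prop := fun z => S z /\ e ⋅ z ⋅ e = z.

Lemma subalg_subcorner S e :
  is_subalg S -> e ⋅ e = e -> is_subalg (subcorner S e).
Proof.
move=> hS ee; split.
- by split; [apply: subalg0 | rewrite nmulr0 nmul0r].
- move=> x y [Sx ex] [Sy ey].
  by split; [apply: subalgD | rewrite nmulDr nmulDl ex ey].
- by move=> a x [Sx ex]; split; [apply: subalgZ | rewrite nua_mulZr nua_mulZl ex].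
move=> x y [Sx ex] [Sy ey]; split; first exact: subalgM.
by rewrite nmulA (idem_corner_l ee ex) -nmulA (idem_corner_r ee ey).
Qed.

Lemma subcorner_identity S e :
  S e -> e ⋅ e = e -> is_identity_of (subcorner S e) e.
Proof.
move=> Se ee; split; first by split; rewrite ?ee.
by move=> x [_ ex]; rewrite (idem_corner_l ee ex) (idem_corner_r ee ex).
Qed.

(* With [t = f + f'] a decomposition into orthogonal idempotents and [u] a unit
   whose [f'f']-block is [f'], the Schur complement of that block is a unit of
   the corner [fAf] with inverse the [ff]-block of [u^-1]. *)
Lemma schur_complement_unit f f' u v :
  f ⋅ f = f -> f' ⋅ f' = f' -> f ⋅ f' = 0 -> f' ⋅ f = 0 ->
  u ⋅ (f + f') = u -> v ⋅ (f + f') = v ->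
  u ⋅ v = f + f' -> v ⋅ u = f + f' -> f' ⋅ u ⋅ f' = f' ->
  (f ⋅ u ⋅ f - f ⋅ u ⋅ f' ⋅ u ⋅ f) ⋅ (f ⋅ v ⋅ f) = f /\
  (f ⋅ v ⋅ f) ⋅ (f ⋅ u ⋅ f - f ⋅ u ⋅ f' ⋅ u ⋅ f) = f.
Proof.
move=> ff f'f' ff' f'f ut vt uv vu f'uf'.
have tf : (f + f') ⋅ f = f by rewrite nmulDl ff f'f addr0.
have tf' : (f + f') ⋅ f' = f' by rewrite nmulDl ff' f'f' add0r.
have f'uf'_l w : w ⋅ f' ⋅ u ⋅ f' = w ⋅ f' by rewrite -[in RHS]f'uf' !nmulA.
split.
- have e1 : f ⋅ u ⋅ f' ⋅ u ⋅ (f + f') ⋅ v ⋅ f = 0.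
    by rewrite (nmulA_eq ut) (nmulA_eq uv) -nmulA tf -nmulA f'f nmulr0.
  rewrite nmulDr !nmulDl f'uf'_l in e1.
  have e2 : f ⋅ u ⋅ (f + f') ⋅ v ⋅ f = f.
    by rewrite (nmulA_eq ut) (nmulA_eq uv) -nmulA tf ff.
  rewrite nmulDr !nmulDl in e2.
  have k1 : f ⋅ u ⋅ f' ⋅ u ⋅ f ⋅ v ⋅ f = - (f ⋅ u ⋅ f' ⋅ v ⋅ f).
    by apply/eqP; rewrite -addr_eq0 e1.
  by rewrite nmulBl !nmulA !(nmulA_eq ff) k1 opprK.
- have e3 : f ⋅ v ⋅ (f + f') ⋅ u ⋅ f' = 0.
    by rewrite (nmulA_eq vt) (nmulA_eq vu) -nmulA tf' ff'.
  rewrite nmulDr !nmulDl f'uf'_l in e3.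
  have e4 : f ⋅ v ⋅ (f + f') ⋅ u ⋅ f = f.
    by rewrite (nmulA_eq vt) (nmulA_eq vu) -nmulA tf ff.
  rewrite nmulDr !nmulDl in e4.
  have k2 : f ⋅ v ⋅ f ⋅ u ⋅ f' = - (f ⋅ v ⋅ f').
    by apply/eqP; rewrite -addr_eq0 e3.
  by rewrite nmulBr !nmulA !(nmulA_eq ff) k2 !nmulNr opprK.
Qed.

(* For [x] in [fTf], apply unit-regularity to [x + (t - f)]: the unit obtained
   has [(t - f)]-block [t - f], so its Schur complement works for [x]. *)
Lemma unit_regular_subcorner T t f :
  is_subalg T -> is_identity_of T t -> unit_regular_with T t ->
  T f -> f ⋅ f = f -> unit_regular_with (subcorner T f) f.
Proof.
move=> hT [Tt tid] hur Tf ff x [Tx fxf].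
have tl z : T z -> t ⋅ z = z by move=> /tid [].
have tr z : T z -> z ⋅ t = z by move=> /tid [].
set f' := t - f.
have Tf' : T f' by apply: subalgB.
have tE : t = f + f' by rewrite /f' addrC subrK.
have ff' : f ⋅ f' = 0 by rewrite /f' nmulBr ff tr // subrr.
have f'f : f' ⋅ f = 0 by rewrite /f' nmulBl ff tl // subrr.
have f'f' : f' ⋅ f' = f' by rewrite {1}/f' nmulBl ff' subr0 tl.
have fx := idem_corner_l ff fxf; have xf := idem_corner_r ff fxf.
have f'x : f' ⋅ x = 0 by rewrite /f' nmulBl tl // fx subrr.
have xf' : x ⋅ f' = 0 by rewrite /f' nmulBr tr // xf subrr.
clearbody f'.
have f'y : f' ⋅ (x + f') = f' by rewrite nmulDr f'x f'f' add0r.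
have yf' : (x + f') ⋅ f' = f' by rewrite nmulDl xf' f'f' add0r.
have fy : f ⋅ (x + f') = x by rewrite nmulDr fx ff' addr0.
have yf : (x + f') ⋅ f = x by rewrite nmulDl xf f'f addr0.
have [u [v [Tu Tv uv vu yuy]]] := hur _ (subalgD hT Tx Tf').
have block g h : (g ⋅ (x + f')) ⋅ u ⋅ ((x + f') ⋅ h) = g ⋅ (x + f') ⋅ h.
  by rewrite -[in RHS]yuy !nmulA.
have f'uf' : f' ⋅ u ⋅ f' = f' by have := block f' f'; rewrite f'y yf' f'f'.
have xuf' : x ⋅ u ⋅ f' = 0 by have := block f f'; rewrite fy yf' xf'.
have xux : x ⋅ u ⋅ x = x by have := block f f; rewrite fy yf xf.
have ut : u ⋅ (f + f') = u by rewrite -tE tr.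
have vt : v ⋅ (f + f') = v by rewrite -tE tr.
rewrite tE in uv vu.
have [Wv vW] := schur_complement_unit ff f'f' ff' f'f ut vt uv vu f'uf'.
exists (f ⋅ u ⋅ f - f ⋅ u ⋅ f' ⋅ u ⋅ f), (f ⋅ v ⋅ f); split => //.
- split; first by apply: subalgB; repeat apply: subalgM.
  by rewrite nmulBr nmulBl !nmulA ff !(nmulA_eq ff).
- by split; [repeat apply: subalgM | rewrite !nmulA ff !(nmulA_eq ff)].
by rewrite nmulBr nmulBl !nmulA xf (nmulA_eq fx) xux xuf' !nmul0r subr0.
Qed.

Definition regular_in S := forall x, S x -> exists2 y, S y & x ⋅ y ⋅ x = x.

Lemma locally_unit_regular_regular S : locally_unit_regular_in S -> regular_in S.
Proof.
move=> lurS x Sx.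
have xS : forall z, z \in [:: x] -> S z by move=> z /[!inE] /eqP->.
have [T [_ TS sT [t [_ urT]]]] := lurS _ xS.
have [u [_ [Tu _ _ _ xux]]] := urT x (sT x (mem_head _ _)).
by exists u; first exact: TS.
Qed.

Lemma locally_unit_regular_local_unit S (s : seq A) :
  locally_unit_regular_in S -> (forall x, x \in s -> S x) ->
  exists2 k, S k & {in s, forall x, k ⋅ x = x /\ x ⋅ k = x}.
Proof.
move=> lurS sS; have [T [_ TS sT [k [[Tk kid] _]]]] := lurS s sS.
by exists k; [apply: TS | move=> x /sT /kid].
Qed.

(* If [P] is a left unit and [Q] a right unit for some elements, then [E] is
   a two-sided one; it is the idempotent [P + (1 - P) t Q (1 - P)] written
   without an identity, [t] being an inner inverse of [r = Q (1 - P)]. *)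
Lemma idempotent_left_right_unit (P Q r t : A) :
  P ⋅ P = P -> Q ⋅ Q = Q -> r = Q - Q ⋅ P -> r ⋅ t ⋅ r = r ->
  let E := P + (t ⋅ r - P ⋅ t ⋅ r) in
  [/\ E ⋅ E = E, E ⋅ P = P & Q ⋅ E = Q].
Proof.
move=> PP QQ rE rtr E.
have rP : r ⋅ P = 0 by rewrite rE nmulBl (nmulA_eq PP) subrr.
have [m mE] : {m | m = t ⋅ r - P ⋅ t ⋅ r} by exists (t ⋅ r - P ⋅ t ⋅ r).
have Pm : P ⋅ m = 0 by rewrite mE nmulBr !nmulA PP subrr.
have mP : m ⋅ P = 0 by rewrite mE nmulBl !(nmulA_eq rP) !nmulr0 subrr.
have rm : r ⋅ m = r by rewrite mE nmulBr !nmulA rtr rP !nmul0r subr0.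
have mm : m ⋅ m = m by rewrite {1}mE nmulBl !(nmulA_eq rm) -mE.
have Qm : Q ⋅ m = r.
  by have := rtr; rewrite {1}rE !nmulBl => <-; rewrite mE nmulBr !nmulA.
rewrite /E -mE; split.
- by rewrite !nmulDl !nmulDr PP Pm mP mm addr0 add0r.
- by rewrite nmulDl PP mP addr0.
- by rewrite nmulDr Qm rE addrC subrK.
Qed.

Lemma idempotent_local_unit S (cL cR : A) (sL sR : seq A) :
  is_subalg S -> regular_in S -> S cL -> S cR ->
  {in sL, forall a, cL ⋅ a = a} -> {in sR, forall a, a ⋅ cR = a} ->
  exists E, [/\ S E, E ⋅ E = E, {in sL, forall a, E ⋅ a = a} &
                {in sR, forall a, a ⋅ E = a}].
Proof.
move=> hS regS ScL ScR cLs cRs.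
have [yL SyL cyL] := regS _ ScL; have [yR SyR cyR] := regS _ ScR.
set P := cL ⋅ yL; set Q := yR ⋅ cR.
have PP : P ⋅ P = P by rewrite /P nmulA cyL.
have QQ : Q ⋅ Q = Q by rewrite /Q -!nmulA (nmulA cR) cyR.
have PsL : {in sL, forall a, P ⋅ a = a}.
  by move=> a /cLs aL; rewrite /P -[in LHS]aL nmulA cyL aL.
have sRQ : {in sR, forall a, a ⋅ Q = a}.
  by move=> a /cRs aR; rewrite /Q -[in LHS]aR -!nmulA (nmulA cR) cyR aR.
have SP : S P by apply: subalgM.
have SQ : S Q by apply: subalgM.
have Sr : S (Q - Q ⋅ P) by apply: subalgB => //; apply: subalgM.
have [t St rtr] := regS _ Sr.
have [EE EP QE] := idempotent_left_right_unit PP QQ (erefl _) rtr.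
eexists; split; [| exact: EE | |].
- by apply: subalgD => //; apply: subalgB; repeat apply: subalgM.
- by move=> a /PsL Pa; rewrite -[in LHS]Pa nmulA EP Pa.
- by move=> a /sRQ aQ; rewrite -[in LHS]aQ -nmulA QE aQ.
Qed.

Lemma corner_unit_extend e h W W' :
  e ⋅ e = e -> e ⋅ h ⋅ e = h -> h ⋅ h = h -> h ⋅ W ⋅ h = W -> h ⋅ W' ⋅ h = W' ->
  W ⋅ W' = h -> W' ⋅ W = h ->
  let w := W + (e - h) in let w' := W' + (e - h) in
  [/\ e ⋅ w ⋅ e = w, e ⋅ w' ⋅ e = w', w ⋅ w' = e & w' ⋅ w = e].
Proof.
move=> ee eh hh hW hW' WW' W'W w w'.
have Wcorner V : h ⋅ V ⋅ h = V ->
    [/\ e ⋅ V = V, V ⋅ e = V, V ⋅ (e - h) = 0 & (e - h) ⋅ V = 0].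
  move=> hV; have hVl := idem_corner_l hh hV; have hVr := idem_corner_r hh hV.
  have eV : e ⋅ V = V by rewrite -hVl nmulA (idem_corner_l ee eh).
  have Ve : V ⋅ e = V by rewrite -hVr -nmulA (idem_corner_r ee eh).
  by split; rewrite // ?nmulBr ?nmulBl ?eV ?Ve ?hVl ?hVr subrr.
have [eW We WE EW] := Wcorner _ hW; have [eW' W'e W'E EW'] := Wcorner _ hW'.
have EE : (e - h) ⋅ (e - h) = e - h.
  rewrite nmulBl !nmulBr ee (idem_corner_l ee eh) (idem_corner_r ee eh).
  by rewrite hh subrr subr0.
have eE : e ⋅ (e - h) = e - h by rewrite nmulBr ee (idem_corner_l ee eh).
have Ee : (e - h) ⋅ e = e - h by rewrite nmulBl ee (idem_corner_r ee eh).
have ecorner V : e ⋅ V = V -> V ⋅ e = V -> e ⋅ (V + (e - h)) ⋅ e = V + (e - h).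
  by move=> eV Ve; rewrite nmulDr nmulDl eV Ve eE Ee.
split; rewrite ?ecorner //.
- rewrite /w /w' (nmulDl W) (nmulDr W) (nmulDr (e - h)).
  by rewrite WW' WE EW' EE addr0 add0r addrC subrK.
- rewrite /w /w' (nmulDl W') (nmulDr W') (nmulDr (e - h)).
  by rewrite W'W W'E EW EE addr0 add0r addrC subrK.
Qed.

Lemma corner_idem_corner e z : e ⋅ e = e -> corner e z -> e ⋅ z ⋅ e = z.
Proof. by move=> ee [r ->]; rewrite !nmulA ee -nmulA ee. Qed.

End NonUnitalAlgebra.

Section IdealExtension.
Variables (K : fieldType) (R : nualg K) (J : R -> Prop).
Variables (Q : nualg K) (pi : R -> Q).
Hypotheses (hJ : is_ideal J) (hpi : is_quotient_map J pi).
Implicit Types (x y z e f g h p : R).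

Lemma idealD x y : J x -> J y -> J (x + y).
Proof. by case: hJ => _ h _ _; apply: h. Qed.
Lemma idealN x : J x -> J (- x).
Proof. by case: hJ => _ _ h _ Jx; rewrite -scaleN1r; apply: h. Qed.
Lemma idealB x y : J x -> J y -> J (x - y).
Proof. by move=> Jx Jy; apply: idealD => //; apply: idealN. Qed.
Lemma idealMl x y : J y -> J (x ⋅ y).
Proof. by case: hJ => _ _ _ h /(h x) []. Qed.
Lemma idealMr x y : J x -> J (x ⋅ y).
Proof. by case: hJ => _ _ _ h /(h y) []. Qed.

Lemma ideal_subalg : is_subalg J.
Proof. by case: hJ => J0 JD JZ _; split=> // x y _; apply: idealMl. Qed.

Lemma piD x y : pi (x + y) = pi x + pi y. Proof. by case: hpi. Qed.
Lemma piZ a x : pi (a *: x) = a *: pi x. Proof. by case: hpi. Qed.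
Lemma piM x y : pi (x ⋅ y) = pi x ⋅ pi y. Proof. by case: hpi. Qed.
Lemma pi_surj q : exists x, pi x = q. Proof. by case: hpi. Qed.
Lemma pi_eq0 x : (pi x = 0) <-> J x. Proof. by case: hpi. Qed.

Lemma pi0 : pi 0 = 0. Proof. by apply: (addrI (pi 0)); rewrite -piD !addr0. Qed.
Lemma piB x y : pi (x - y) = pi x - pi y.
Proof. by rewrite piD -scaleN1r piZ scaleN1r. Qed.

Lemma pi_eq x y : (pi x = pi y) <-> J (x - y).
Proof.
split=> [xy | /pi_eq0]; first by apply/pi_eq0; rewrite piB xy subrr.
by rewrite piB => /eqP; rewrite subr_eq0 => /eqP.
Qed.

Lemma subalg_preimage T : is_subalg T -> is_subalg (fun x => T (pi x)).
Proof.
move=> hT; split.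
- by rewrite pi0; apply: subalg0.
- by move=> x y Tx Ty; rewrite piD; apply: subalgD.
- by move=> a x Tx; rewrite piZ; apply: subalgZ.
- by move=> x y Tx Ty; rewrite piM; apply: subalgM.
Qed.

Hypotheses (lurJ : locally_unit_regular_in J) (lurQ : locally_unit_regular Q).

Lemma regular_ideal_corner f : f ⋅ f = f -> regular_in (subcorner J f).
Proof.
move=> ff x [Jx fxf].
have [y Jy xyx] := locally_unit_regular_regular lurJ Jx.
exists (f ⋅ y ⋅ f).
  by split; [apply: idealMr; apply: idealMl | rewrite !nmulA ff -nmulA ff].
by rewrite !nmulA (idem_corner_r ff fxf) -nmulA (idem_corner_l ff fxf).
Qed.

(* [y + m - m x y] corrects an inner inverse [y] of [x] modulo [J], where [m]
   is built from an inner inverse [t] of the defect [z = x - x y x]: then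
   [x m = z t], so that the correction adds exactly [z t z = z]. *)
Lemma regular_extension : regular_in (fun _ : R => True).
Proof.
move=> x _.
have [qy _ xyx] := locally_unit_regular_regular lurQ (I : (fun _ => True) (pi x)).
have [y piy] := pi_surj qy.
have Jz : J (x - x ⋅ y ⋅ x) by apply/pi_eq0; rewrite piB !piM piy xyx subrr.
have [t _ ztz] := locally_unit_regular_regular lurJ Jz.
set m := t - y ⋅ x ⋅ t.
have xm : x ⋅ m = (x - x ⋅ y ⋅ x) ⋅ t by rewrite /m nmulBr nmulBl !nmulA.
exists (y + m - m ⋅ x ⋅ y) => //.
rewrite nmulBr nmulBl nmulDr nmulDl !nmulA xm -addrA.
rewrite nmulBr !nmulA in ztz.
by rewrite ztz addrC subrK.
Qed.

(* Lift a local unit [c] of [Q] and correct it on either side by a local unit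
   [k] of [J] for the defects [a - c a] and [a - a c]. *)
Lemma idempotent_local_units (s : seq R) :
  exists E, [/\ E ⋅ E = E, {in s, forall a, E ⋅ a = a} &
                {in s, forall a, a ⋅ E = a}].
Proof.
have [qc _ qcs] :=
  locally_unit_regular_local_unit (s := map pi s) lurQ (fun _ _ => I).
have [c pic] := pi_surj qc; subst qc.
have cs a : a \in s -> pi c ⋅ pi a = pi a /\ pi a ⋅ pi c = pi a.
  by move=> sa; apply: qcs; apply: map_f.
set l := [seq a - c ⋅ a | a <- s] ++ [seq a - a ⋅ c | a <- s].
have lJ z : z \in l -> J z.
  rewrite mem_cat => /orP [] /mapP [a /cs [ca ac] ->]; apply/pi_eq0.
  - by rewrite piB piM ca subrr.
  - by rewrite piB piM ac subrr.
have [k Jk kl] := locally_unit_regular_local_unit lurJ lJ.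
have cL : {in s, forall a, (c + k - k ⋅ c) ⋅ a = a}.
  move=> a sa; have /kl [ka _] : a - c ⋅ a \in l.
    by rewrite mem_cat; apply/orP; left; apply/mapP; exists a.
  by rewrite nmulBl nmulDl -addrA -nmulA -nmulBr ka addrC subrK.
have cR : {in s, forall a, a ⋅ (c + k - c ⋅ k) = a}.
  move=> a sa; have /kl [_ ak] : a - a ⋅ c \in l.
    by rewrite mem_cat; apply/orP; right; apply/mapP; exists a.
  by rewrite nmulBr nmulDr -addrA nmulA -nmulBl ak addrC subrK.
have full : is_subalg (fun _ : R => True) by [].
have [E [_ EE Es sE]] := idempotent_local_unit full regular_extension I I cL cR.
by exists E.
Qed.

Lemma ideal_corner_idempotent f aL aR :
  f ⋅ f = f -> J aL -> J aR -> f ⋅ aL = aL -> aR ⋅ f = aR ->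
  exists h, [/\ subcorner J f h, h ⋅ h = h, h ⋅ aL = aL & aR ⋅ h = aR].
Proof.
move=> ff JaL JaR faL aRf.
have aJ z : z \in [:: aL; aR] -> J z by rewrite !inE => /orP [] /eqP ->.
have [k Jk kl] := locally_unit_regular_local_unit lurJ aJ.
have [kaL _] := kl aL (mem_head _ _).
have [_ aRk] : k ⋅ aR = aR /\ aR ⋅ k = aR by apply: kl; rewrite !inE eqxx orbT.
have Jc : subcorner J f (f ⋅ k ⋅ f).
  by split; [apply: idealMr; apply: idealMl | rewrite !nmulA ff -nmulA ff].
have cL : {in [:: aL], forall a, f ⋅ k ⋅ f ⋅ a = a}.
  by move=> a /[!inE] /eqP->; rewrite -nmulA faL -nmulA kaL faL.
have cR : {in [:: aR], forall a, a ⋅ (f ⋅ k ⋅ f) = a}.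
  by move=> a /[!inE] /eqP->; rewrite !nmulA aRf aRk aRf.
have [h [Jh hh haL aRh]] := idempotent_local_unit
  (subalg_subcorner ideal_subalg ff) (regular_ideal_corner ff) Jc Jc cL cR.
by exists h; split; [| | apply: haL | apply: aRh]; rewrite ?inE.
Qed.

(* [h] is the sum of idempotents of [J] in the corners [gRg] and [g'Rg'],
   [g' = e - g], absorbing the corresponding Peirce components of [i]. *)
Lemma commuting_ideal_idempotent e g i :
  e ⋅ e = e -> g ⋅ g = g -> e ⋅ g ⋅ e = g -> J i -> e ⋅ i ⋅ e = i ->
  exists h, [/\ subcorner J e h, h ⋅ h = h, h ⋅ g = g ⋅ h, h ⋅ i = i & i ⋅ h = i].
Proof.
move=> ee gg ege Ji eie.
have eg := idem_corner_l ee ege; have ge := idem_corner_r ee ege.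
set g' := e - g.
have g'g' : g' ⋅ g' = g' by rewrite /g' nmulBl !nmulBr ee eg ge gg subrr subr0.
have gg' : g ⋅ g' = 0 by rewrite /g' nmulBr ge gg subrr.
have g'g : g' ⋅ g = 0 by rewrite /g' nmulBl eg gg subrr.
have iE : i = g ⋅ i + g' ⋅ i.
  by rewrite -nmulDl /g' addrC subrK (idem_corner_l ee eie).
have iE' : i = i ⋅ g + i ⋅ g'.
  by rewrite -nmulDr /g' addrC subrK (idem_corner_r ee eie).
have gi : g ⋅ (g ⋅ i) = g ⋅ i by rewrite nmulA gg.
have ig : i ⋅ g ⋅ g = i ⋅ g by rewrite -nmulA gg.
have g'i : g' ⋅ (g' ⋅ i) = g' ⋅ i by rewrite nmulA g'g'.
have ig' : i ⋅ g' ⋅ g' = i ⋅ g' by rewrite -nmulA g'g'.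
have [h1 [[Jh1 gh1g] h1h1 h1L h1R]] :=
  ideal_corner_idempotent gg (idealMl g Ji) (idealMr g Ji) gi ig.
have [h2 [[Jh2 gh2g] h2h2 h2L h2R]] :=
  ideal_corner_idempotent g'g' (idealMl g' Ji) (idealMr g' Ji) g'i ig'.
have gh1 := idem_corner_l gg gh1g; have h1g := idem_corner_r gg gh1g.
have gh2 := idem_corner_l g'g' gh2g; have h2g := idem_corner_r g'g' gh2g.
have h1g' : h1 ⋅ g' = 0 by rewrite -h1g -nmulA gg' nmulr0.
have g'h1 : g' ⋅ h1 = 0 by rewrite -gh1 nmulA g'g nmul0r.
have h2g0 : h2 ⋅ g = 0 by rewrite -h2g -nmulA g'g nmulr0.
have gh20 : g ⋅ h2 = 0 by rewrite -gh2 nmulA gg' nmul0r.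
have h1h2 : h1 ⋅ h2 = 0 by rewrite -h1g -nmulA gh20 nmulr0.
have h2h1 : h2 ⋅ h1 = 0 by rewrite -h2g -nmulA g'h1 nmulr0.
have eg' : e ⋅ g' = g' by rewrite /g' nmulBr ee eg.
have g'e : g' ⋅ e = g' by rewrite /g' nmulBl ee ge.
exists (h1 + h2); split.
- split; first exact: idealD.
  rewrite -[in LHS]gh1g -[in LHS]gh2g nmulDr nmulDl !nmulA eg eg'.
  by rewrite -!nmulA ge g'e !nmulA gh1g gh2g.
- by rewrite nmulDl !nmulDr h1h1 h1h2 h2h1 h2h2 addr0 add0r.
- by rewrite nmulDl nmulDr h1g h2g0 gh1 gh20.
- rewrite [in LHS]iE nmulDl !nmulDr h1L h2L !nmulA h1g' h2g0 !nmul0r.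
  by rewrite addr0 add0r -iE.
- rewrite [in LHS]iE' nmulDl (nmulDr (i ⋅ g)) (nmulDr (i ⋅ g')) h1R h2R.
  by rewrite -!nmulA gh20 g'h1 !nmulr0 addr0 add0r -iE'.
Qed.

(* With [b = p - p p] and [F = y b] for an inner inverse [y] of [b], we have
   [b F = b]; as [p] commutes with [b], [g = p - p F] is idempotent. *)
Lemma idempotent_lift_corner e p :
  e ⋅ e = e -> e ⋅ p ⋅ e = p -> J (p - p ⋅ p) ->
  exists g, [/\ g ⋅ g = g, e ⋅ g ⋅ e = g & J (p - g)].
Proof.
move=> ee epe Jb; set b := p - p ⋅ p in Jb.
have ep := idem_corner_l ee epe; have pe := idem_corner_r ee epe.
have [y _ byb] := locally_unit_regular_regular lurJ Jb.
have be : b ⋅ e = b by rewrite /b nmulBl pe -nmulA pe.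
have pp : p ⋅ p = p - b by rewrite /b opprB addrC subrK.
have pb : p ⋅ b = b ⋅ p by rewrite /b nmulBr nmulBl !nmulA.
clearbody b.
set F := y ⋅ b.
have bF : b ⋅ F = b by rewrite /F nmulA byb.
have Fe : F ⋅ e = F by rewrite /F -nmulA be.
have FpF : F ⋅ p ⋅ F = F ⋅ p.
  by rewrite /F -!nmulA (nmulA b p) -pb -nmulA (nmulA b y) byb.
have pFpF : p ⋅ F ⋅ (p ⋅ F) = p ⋅ F ⋅ p by rewrite -nmulA (nmulA F) FpF nmulA.
exists (p - p ⋅ F); split.
- rewrite nmulBl !nmulBr pFpF subrr subr0 nmulA pp nmulBl bF.
  by rewrite opprB addrA subrK.
- by rewrite nmulBr nmulBl epe nmulA ep -nmulA Fe.
- by rewrite opprB addrC subrK /F; apply: idealMl; apply: idealMl.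
Qed.

(* Write [p = g + i] with [g] idempotent and [i] in [J], and take an
   idempotent [h] of [J] commuting with [p]; then [w] is [e - h] plus a unit
   of a unit-regular corner of [hJh] acting as an inner inverse of [h p]. *)
Lemma corner_unit_mod_ideal e p :
  e ⋅ e = e -> e ⋅ p ⋅ e = p -> J (p - p ⋅ p) ->
  exists w w', [/\ e ⋅ w ⋅ e = w, e ⋅ w' ⋅ e = w', w ⋅ w' = e, w' ⋅ w = e &
                   [/\ J (w - e), J (w' - e) & p ⋅ w ⋅ p = p]].
Proof.
move=> ee epe Jb.
have [g [gg ege Ji]] := idempotent_lift_corner ee epe Jb.
have eie : e ⋅ (p - g) ⋅ e = p - g by rewrite nmulBr nmulBl epe ege.
have [h [[Jh ehe] hh hg hi ih]] := commuting_ideal_idempotent ee gg ege Ji eie.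
set i := p - g in Ji hi ih.
have pE : p = g + i by rewrite /i addrC subrK.
clearbody i.
have hpE : h ⋅ p = g ⋅ h + i by rewrite pE nmulDr hg hi.
have hp : h ⋅ p = p ⋅ h by rewrite hpE pE nmulDl ih.
have hph : h ⋅ (h ⋅ p) ⋅ h = h ⋅ p by rewrite !nmulA hh -nmulA -hp nmulA hh.
have hpJ z : z \in [:: h; h ⋅ p] -> J z.
  by rewrite !inE => /orP [] /eqP -> //; apply: idealMr.
have [V [hV VJ Vs [t [idV urV]]]] := lurJ hpJ.
have Vh : V h by apply: Vs; rewrite mem_head.
have Vhp : V (h ⋅ p) by apply: Vs; rewrite !inE eqxx orbT.
have [W [W' [[VW hWh] [VW' hW'h] WW' W'W hpW]]] :=
  unit_regular_subcorner hV idV urV Vh hh (conj Vhp hph).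
have [ew ew' ww' w'w] := corner_unit_extend ee ehe hh hWh hW'h WW' W'W.
have pWp : p ⋅ W ⋅ p = h ⋅ p by rewrite -hWh !nmulA -hp -(nmulA _ h p) hpW.
have ghg : g ⋅ h ⋅ g = g ⋅ h by rewrite -nmulA hg nmulA gg.
have ghi : g ⋅ h ⋅ i = g ⋅ i by rewrite -nmulA hi.
have pE' : p ⋅ (e - h) = g - g ⋅ h.
  rewrite nmulBr (idem_corner_r ee epe) -hp hpE [in LHS]pE.
  by rewrite opprD addrACA subrr addr0.
have E'p : (g - g ⋅ h) ⋅ p = g - g ⋅ h.
  by rewrite pE nmulBl !nmulDr gg ghg ghi opprD addrACA subrr addr0.
exists (W + (e - h)), (W' + (e - h)); split => //; split.
- by rewrite addrCA addrAC subrr add0r; apply: idealB => //; apply: VJ.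
- by rewrite addrCA addrAC subrr add0r; apply: idealB => //; apply: VJ.
- by rewrite nmulDr nmulDl pWp pE' E'p hpE addrC addrA subrK -pE.
Qed.

Lemma corner_in_ideal e z : corner_in J e z -> J z.
Proof. by move=> [j [Jj ->]]; apply: idealMr; apply: idealMl. Qed.

Lemma lift_corner_unit e U U' :
  e ⋅ e = e -> units_lift J e ->
  pi e ⋅ U ⋅ pi e = U -> pi e ⋅ U' ⋅ pi e = U' ->
  U ⋅ U' = pi e -> U' ⋅ U = pi e ->
  exists u v, [/\ e ⋅ u ⋅ e = u, e ⋅ v ⋅ e = v, u ⋅ v = e, v ⋅ u = e &
                  pi u = U /\ pi v = U'].
Proof.
move=> ee lift eUe eU'e UU' U'U.
have lift_corner V : pi e ⋅ V ⋅ pi e = V -> exists2 x, corner e x & pi x = V.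
  have [x <-] := pi_surj V => eVe.
  by exists (e ⋅ x ⋅ e); [exists x | rewrite !piM eVe].
have [x cx px] := lift_corner _ eUe; have [y cy py] := lift_corner _ eU'e.
have exe := corner_idem_corner ee cx; have eye := corner_idem_corner ee cy.
have defect z z' : e ⋅ z ⋅ e = z -> e ⋅ z' ⋅ e = z' -> pi (z ⋅ z') = pi e ->
    corner_in J e (z ⋅ z' - e).
  move=> eze ez'e pzz'; exists (z ⋅ z' - e); split; first exact/pi_eq.
  rewrite nmulBr nmulBl nmulA (idem_corner_l ee eze) -nmulA.
  by rewrite (idem_corner_r ee ez'e) !ee.
have pxy : pi (x ⋅ y) = pi e by rewrite piM px py.
have pyx : pi (y ⋅ x) = pi e by rewrite piM px py.
have [u [v [cu cv uv vu /corner_in_ideal/pi_eq]]] :=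
  lift x y cx cy (defect _ _ exe eye pxy) (defect _ _ eye exe pyx).
rewrite px => pu.
have pee : pi e ⋅ pi e = pi e by rewrite -piM ee.
have eve := corner_idem_corner ee cv.
exists u, v; split; rewrite ?corner_idem_corner //; split => //.
rewrite -(idem_corner_r ee eve) piM -UU' nmulA -pu -piM vu.
by rewrite (idem_corner_l pee eU'e).
Qed.

(* Lift an inner inverse unit [U] of [pi x] in [pi(e) T pi(e)] to a unit [u]
   of [eRe]; then [x u] is idempotent modulo [J], and [u] is corrected by a
   unit congruent to [e]. *)
Lemma unit_regular_preimage_corner e T t :
  e ⋅ e = e -> units_lift J e ->
  is_subalg T -> is_identity_of T t -> unit_regular_with T t -> T (pi e) ->
  unit_regular_with (subcorner (fun x => T (pi x)) e) e.
Proof.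
move=> ee lift hT idT urT Te x [Tx exe].
have pee : pi e ⋅ pi e = pi e by rewrite -piM ee.
have pexe : pi e ⋅ pi x ⋅ pi e = pi x by rewrite -!piM exe.
have [U [U' [[TU eUe] [TU' eU'e] UU' U'U xUx]]] :=
  unit_regular_subcorner hT idT urT Te pee (conj Tx pexe).
have [u [v [eue eve uv vu [pu pv]]]] := lift_corner_unit ee lift eUe eU'e UU' U'U.
have xe := idem_corner_r ee exe.
have exue : e ⋅ (x ⋅ u) ⋅ e = x ⋅ u.
  by rewrite nmulA (idem_corner_l ee exe) -nmulA (idem_corner_r ee eue).
have Jxu : J (x ⋅ u - x ⋅ u ⋅ (x ⋅ u)).
  by apply/pi_eq0; rewrite piB !piM pu nmulA xUx subrr.
have [w [w' [ewe ew'e ww' w'w [/pi_eq pw /pi_eq pw' xuw]]]] :=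
  corner_unit_mod_ideal ee exue Jxu.
exists (u ⋅ w), (w' ⋅ v); split.
- split; first by rewrite piM pw pu (idem_corner_r pee eUe).
  by rewrite nmulA (idem_corner_l ee eue) -nmulA (idem_corner_r ee ewe).
- split; first by rewrite piM pw' pv (idem_corner_l pee eU'e).
  by rewrite nmulA (idem_corner_l ee ew'e) -nmulA (idem_corner_r ee eve).
- by rewrite nmulA (nmulA_eq ww') (idem_corner_r ee eue).
- by rewrite nmulA (nmulA_eq vu) (idem_corner_r ee ew'e).
- have := congr1 (fun z => z ⋅ v) xuw.
  by rewrite /= !nmulA !(nmulA_eq uv) -nmulA xe.
Qed.

Lemma locally_unit_regular_of_units_lift :
  (forall e, e ⋅ e = e -> units_lift J e) -> locally_unit_regular R.
Proof.
move=> lift s _.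
have [e [ee es se]] := idempotent_local_units s.
have [T [hT _ sT [t [idT urT]]]] := @lurQ (pi e :: map pi s) (fun _ _ => I).
have Te : T (pi e) by apply: sT; rewrite mem_head.
exists (subcorner (fun x => T (pi x)) e); split => //.
- exact: subalg_subcorner (subalg_preimage hT) ee.
- move=> a sa; split; last by rewrite es // se.
  by apply: sT; rewrite inE map_f ?orbT.
exists e; split; first exact: subcorner_identity.
exact: unit_regular_preimage_corner ee (lift e ee) hT idT urT Te.
Qed.

(* The inner inverse unit [W] of [x] in [eSe] is a right inverse of [x] modulo
   [J]: [z = e - x W] kills [x], hence [z = - z j e] for [x y - e = e j e]. *)
Lemma units_lift_of_locally_unit_regular :
  locally_unit_regular R -> forall e, e ⋅ e = e -> units_lift J e.
Proof.
move=> lur e ee x y cx _ [j [Jj xyE]] _.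
have exe := corner_idem_corner ee cx.
have ex := idem_corner_l ee exe; have xe := idem_corner_r ee exe.
have exS z : z \in [:: e; x] -> True by [].
have [S [hS _ sS [f [idS urS]]]] := lur _ exS.
have Se : S e by apply: sS; rewrite mem_head.
have Sx : S x by apply: sS; rewrite !inE eqxx orbT.
have [W [W' [[_ eWe] [_ eW'e] WW' W'W xWx]]] :=
  unit_regular_subcorner hS idS urS Se ee (conj Sx exe).
exists W', W; split => //; [by exists W' | by exists W |].
set z := e - x ⋅ W.
have zx : z ⋅ x = 0 by rewrite /z nmulBl ex xWx subrr.
have ze : z ⋅ e = z by rewrite /z nmulBl ee -nmulA (idem_corner_r ee eWe).
have ez : e ⋅ z = z by rewrite /z nmulBr ee nmulA ex.
have zE : z = - (z ⋅ j ⋅ e).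
  have eE : e = x ⋅ y - e ⋅ j ⋅ e by rewrite -xyE opprB addrC subrK.
  by rewrite -[in LHS]ze [in LHS]eE nmulBr nmulA zx nmul0r sub0r !nmulA ze.
exists (- (z ⋅ j ⋅ W')); split; first by apply/idealN/idealMr/idealMl.
have zW' : z ⋅ W' = W' - x.
  by rewrite /z nmulBl (idem_corner_l ee eW'e) -nmulA WW' xe.
rewrite -zW' {1}zE nmulNr nmulrN nmulNr -(nmulA _ e W') (idem_corner_l ee eW'e).
by rewrite !nmulA ez -[in RHS]nmulA (idem_corner_r ee eW'e).
Qed.

End IdealExtension.

Theorem proposition5p3 (K : fieldType) (R : nualg K) (J : R -> Prop)
    (Q : nualg K) (pi : R -> Q) :
  is_ideal J -> is_quotient_map J pi ->
  locally_unit_regular_in J -> locally_unit_regular Q ->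
  (locally_unit_regular R <->
     forall e : R, e ⋅ e = e -> units_lift J e).
Proof.
move=> hJ hpi lurJ lurQ; split.
- exact: units_lift_of_locally_unit_regular hJ.
- exact: locally_unit_regular_of_units_lift hJ hpi lurJ lurQ.
Qed.
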